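(* Let $K$ be a field of characteristic $\neq2$, $\zeta_4$ a primitive fourth root of unity in a fixed algebraic closure of $K$, and let $x\in K^*$ with $-x\in(K^* )^2$. Choose a fourth root $\sqrt[4]x$ of $x$, giving the Kummer cocycle $x:G_K\to\mathbb Z/4$, $g(\sqrt[4]x)/\sqrt[4]x=\zeta_4^{x(g)}$, and the cochain $\binom x2:G_K\to\mathbb Z/2$, $g\mapsto\binom{x(g)}2\bmod2$. Then there is an equality of cocycles $\binom x2=\{2\sqrt{-x}\}:G_K\to\mathbb Z/2$, where $\sqrt{-x}=\zeta_4(\sqrt[4]x)^2\in K$.
   Context: For $z\in K^*$, $\{z\}:G_K\to\mathbb Z/2$ denotes the mod-$2$ Kummer cocycle $g\mapsto g(\sqrt z)/\sqrt z\in\mu_2=\mathbb Z/2$ (independent of the choice of square root). *)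

From HB Require Import structures.
From mathcomp Require Import all_boot all_order all_algebra.
Set Implicit Arguments. Unset Strict Implicit. Unset Printing Implicit Defensive.
Import Order.TTheory GRing.Theory Num.Theory.
Local Open Scope ring_scope.

Definition is_alg_closure (K : fieldType) (L : closedFieldType)
  (iota : {rmorphism K -> L}) : Prop :=
  forall a : L, exists2 p : {poly K}, p != 0 & root (map_poly iota p) a.

Definition in_GK (K : fieldType) (L : closedFieldType)
  (iota : {rmorphism K -> L}) (g : {rmorphism L -> L}) : Prop :=
  bijective g /\ forall c : K, g (iota c) = iota c.

Definition kummer4 (L : closedFieldType) (zeta y : L) (g : {rmorphism L -> L})
  : 'I_4 :=
  odflt ord0 [pick k : 'I_4 | g y == zeta ^+ k * y].

Definition kummer2 (L : closedFieldType) (r : L) (g : {rmorphism L -> L})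
  : bool :=
  odflt false [pick b : bool | g r == (-1) ^+ b * r].

From HB Require Import structures.
From mathcomp Require Import all_boot all_order all_algebra.
From mathcomp Require Import ring.
Set Implicit Arguments. Unset Strict Implicit. Unset Printing Implicit Defensive.
Import Order.TTheory GRing.Theory Num.Theory.
Local Open Scope ring_scope.

(* Since zeta^2 = -1, w := y (1 + zeta) satisfies w^2 = 2 zeta y^2 = 2 s, so
   w = +-r and the two cocycles may be computed on w.  If g y = zeta^k y, then
   g fixes s = zeta y^2 only if g zeta = (-1)^k zeta, whence
   g w = zeta^k (1 + (-1)^k zeta) y, and checking k = 0, 1, 2, 3 gives
   g w = (-1)^(k choose 2) w. *)

Lemma prim_root4_sqr (R : idomainType) (z : R) :
  4.-primitive_root z -> z ^+ 2 = -1.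
Proof.
move=> z_prim; have : (z ^+ 2) ^+ 2 = 1 ^+ 2 by rewrite -exprM expr1n prim_expr_order.
move/eqP; rewrite eqf_sqr => /orP [/eqP z2_1|/eqP //].
by move: z2_1; rewrite -(expr0 z) => /eqP; rewrite (eq_prim_root_expr z_prim).
Qed.

Section SqrtMinusOne.

Variables (R : comPzRingType) (z : R).
Hypothesis z2 : z ^+ 2 = -1.

(* [ring] cannot use [z2]: we exhibit the difference as a multiple of z^2 + 1. *)
Lemma eq_mod_sqrtm1 (a b c : R) : a - b = (z ^+ 2 + 1) * c -> a = b.
Proof. by move=> h; apply/eqP; rewrite -subr_eq0 h z2 addNr mul0r. Qed.

Lemma sqr_mul_1Dsqrtm1 (y : R) : (y * (1 + z)) ^+ 2 = 2%:R * (z * y ^+ 2).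
Proof. by apply: (@eq_mod_sqrtm1 _ _ (y ^+ 2)); ring. Qed.

Lemma exp_sqrtm1_twist (k : 'I_4) :
  z ^+ k * (1 + (-1) ^+ k * z) = (-1) ^+ odd 'C(k, 2) * (1 + z).
Proof.
case: k => [[|[|[|[|k]]]] lt_k4] //=.
- by rewrite !expr0; ring.
- by apply: (@eq_mod_sqrtm1 _ _ (-1)); ring.
- by apply: (@eq_mod_sqrtm1 _ _ (1 + z)); ring.
- by apply: (@eq_mod_sqrtm1 _ _ (1 + z - z ^+ 2)); ring.
Qed.

End SqrtMinusOne.

Section GaloisAction.

Variables (F : fieldType) (g : {rmorphism F -> F}).

Lemma rmorph_sqrtm1 (z y : F) (k : nat) : z ^+ 2 = -1 -> y != 0 ->
  g y = z ^+ k * y -> g (z * y ^+ 2) = z * y ^+ 2 -> g z = (-1) ^+ k * z.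
Proof.
move=> z2 y0 gy; rewrite rmorphM rmorphXn gy exprMn -exprM mulnC exprM z2.
move=> /(congr1 (fun t => t / y ^+ 2)); rewrite mulrA !mulfK ?expf_neq0 // => gz.
by rewrite -[in RHS]gz mulrCA -expr2 -exprM mulnC exprM sqrrN !expr1n mulr1.
Qed.

Lemma rmorph_scale_sqr (w r e : F) :
  w ^+ 2 = r ^+ 2 -> g w = e * w -> g r = e * r.
Proof.
move/eqP; rewrite eqf_sqr => /orP [] /eqP -> //.
by rewrite rmorphN mulrN => /oppr_inj.
Qed.

End GaloisAction.

Section KummerCocycles.

Variables (L : closedFieldType) (g : {rmorphism L -> L}).

Lemma kummer4E (zeta y : L) : 4.-primitive_root zeta -> y != 0 ->
  g (y ^+ 4) = y ^+ 4 -> g y = zeta ^+ kummer4 zeta y g * y.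
Proof.
move=> zeta_prim y0 gy4.
have [k gy] : exists k : 'I_4, g y = zeta ^+ k * y.
  have : (g y / y) ^+ 4 = 1 by rewrite expr_div_n -rmorphXn gy4 divff ?expf_neq0.
  by case/(prim_rootP zeta_prim) => k zk; exists k; rewrite -zk divfK.
rewrite /kummer4; case: pickP => [k' /eqP // | /(_ k)].
by rewrite gy eqxx.
Qed.

Lemma kummer2E (r : L) (c : bool) : (2%:R : L) != 0 -> r != 0 ->
  g r = (-1) ^+ c * r -> kummer2 r g = c.
Proof.
move=> two0 r0 gr; have m1 : (-1 : L) != 1.
  by apply: contra two0 => /eqP m1; rewrite mulr2n -{1}m1 addNr.
rewrite /kummer2; case: pickP => [b /eqP | /(_ c)]; last by rewrite gr eqxx.
rewrite gr => /(mulIf r0); case: b c {gr} => [] [] //= /eqP.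
  by rewrite expr0 expr1 eq_sym (negPf m1).
by rewrite expr1 expr0 (negPf m1).
Qed.

End KummerCocycles.

Theorem lemma12p5 (K : fieldType) (L : closedFieldType)
  (iota : {rmorphism K -> L}) (Lclos : is_alg_closure iota)
  (char2 : (2%:R : K) != 0)
  (zeta : L) (zeta_prim : 4.-primitive_root zeta)
  (x : K) (x_neq0 : x != 0) (hx : exists t : K, t ^+ 2 = - x)
  (y : L) (hy : y ^+ 4 = iota x)
  (s : K) (hs : iota s = zeta * y ^+ 2)
  (r : L) (hr : r ^+ 2 = iota (2%:R * s)) :
  forall g : {rmorphism L -> L}, in_GK iota g ->
    ('C(nat_of_ord (kummer4 zeta y g), 2) %% 2)%N = nat_of_bool (kummer2 r g).
Proof.
move=> g [_ gfix].
have z2 := prim_root4_sqr zeta_prim.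
have y0 : y != 0.
  by apply: contraNneq x_neq0 => y0; rewrite -(fmorph_eq0 iota) -hy y0 expr0n.
have two0 : (2%:R : L) != 0 by rewrite -(rmorph_nat iota) fmorph_eq0.
have r0 : r != 0.
  have zeta0 : zeta != 0 by rewrite (prim_root_eq0 zeta_prim).
  apply/eqP => r0; move: (mulf_neq0 two0 (mulf_neq0 zeta0 (expf_neq0 2 y0))).
  by rewrite -hs -(rmorph_nat iota) -rmorphM -hr r0 expr0n eqxx.
set k := kummer4 zeta y g.
have gy : g y = zeta ^+ k * y by apply: kummer4E; rewrite ?hy ?gfix.
have gzeta : g zeta = (-1) ^+ k * zeta.
  by apply: rmorph_sqrtm1 gy _; rewrite // -hs gfix.
have gw : g (y * (1 + zeta)) = (-1) ^+ odd 'C(k, 2) * (y * (1 + zeta)).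
  by rewrite rmorphM rmorphD rmorph1 gy gzeta mulrAC exp_sqrtm1_twist // -mulrA (mulrC y).
have sqr_w : (y * (1 + zeta)) ^+ 2 = r ^+ 2.
  by rewrite hr rmorphM rmorph_nat hs sqr_mul_1Dsqrtm1.
by rewrite modn2 (kummer2E two0 r0 (rmorph_scale_sqr sqr_w gw)).
Qed.
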